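(* Let $k\geq1$ and let $w$ be a reduced word on $\{\alpha_k^{\pm1},\dots,\alpha_1^{\pm1},\beta^{\pm1}\}$. For every finite subset $F$ of the vertex set $X$ of the pre-graph $G_0$, there is an extension $G$ of $G_0$ (with labels in $\{\alpha_k^{\pm1},\dots,\alpha_1^{\pm1},\beta^{\pm1}\}$) such that the path $P(w,v_0)$ embeds in $G$, the image of $P(w,v_0)$ in $G$ contains no vertex of $F$, and $G\setminus G_0$ (the set of edges of $G$ not in $G_0$) is finite.
   Context: A graph consists of a vertex set $V$, an edge set $E$, a fixed-point-free involution $e\mapsto\bar e$ on $E$, and maps $i,t:E\to V$ (initial and terminal vertex) with $i(\bar e)=t(e)$. A labeling on $S^{\pm1}=S\cup S^{-1}$ is a map $l:E\to S^{\pm1}$ with $l(\bar e)=l(e)^{-1}$. A labeled graph is well-labeled if $i(e)=i(e')$ and $l(e)=l(e')$ imply $e=e'$. A homomorphism of labeled graphs maps vertices to vertices and edges to edges, preserving $i$, $t$ and labels; an embedding is an injective homomorphism. A word $w_m\cdots w_1$ is reduced if $w_{j+1}\neq w_j^{-1}$ for all $j$. For a reduced word $w=w_m\cdots w_1$, the path $P(w,v_0)$ is the labeled graph with $m+1$ distinct vertices $v_0,v_1,\dots,v_m$ and directed edges $e_1,\dots,e_m$ (together with their inverses) where $e_j$ goes from $v_{j-1}$ to $v_j$ and has label $w_j$. Let $X$ be an infinite countable set and $\beta$ a permutation of $X$ acting simply transitively (so $X\cong\mathbb{Z}$ and $\beta$ is $x\mapsto x+1$). The pre-graph $G_0$ has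 vertex set $X$ and, for each $x\in X$, one directed edge from $x$ to $\beta(x)$ labeled $\beta$ (together with its inverse edge, labeled $\beta^{-1}$). An extension of $G_0$ is a well-labeled graph labeled on $\{\alpha_k^{\pm1},\dots,\alpha_1^{\pm1},\beta^{\pm1}\}$ which contains $G_0$ and has vertex set exactly $X$. *)

From Stdlib Require Import List.
From mathcomp Require Import all_boot all_order all_algebra.
Set Implicit Arguments. Unset Strict Implicit. Unset Printing Implicit Defensive.
Import GRing.Theory Num.Theory.

(* Generators: [None] is beta, [Some i] (i : 'I_k) is alpha_(i+1).
   A letter is a generator together with an exponent sign:
   (g, true) = g, (g, false) = g^{-1}. *)
Definition gen (k : nat) := option 'I_k.
Definition letter (k : nat) := (gen k * bool)%type.
Definition linv {k : nat} (a : letter k) : letter k := (a.1, ~~ a.2).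
Definition beta_l {k : nat} : letter k := (None, true).

Record lgraph (k : nat) (V : Type) := LGraph {
  edge : Type;
  ebar : edge -> edge;
  src : edge -> V;
  tgt : edge -> V;
  lab : edge -> letter k;
  ebarK : forall e, ebar (ebar e) = e;
  ebar_nofix : forall e, ebar e <> e;
  src_bar : forall e, src (ebar e) = tgt e;
  lab_bar : forall e, lab (ebar e) = linv (lab e) }.

Arguments edge {k V} _.
Arguments ebar {k V} _ _.
Arguments src {k V} _ _.
Arguments tgt {k V} _ _.
Arguments lab {k V} _ _.

Definition well_labeled {k : nat} {V : Type} (G : lgraph k V) : Prop :=
  forall e e' : edge G, src G e = src G e' -> lab G e = lab G e' -> e = e'.

Definition is_hom {k : nat} {V W : Type} (G : lgraph k V) (H : lgraph k W)
  (fV : V -> W) (fE : edge G -> edge H) : Prop :=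
  forall e : edge G,
    src H (fE e) = fV (src G e) /\ tgt H (fE e) = fV (tgt G e) /\
    lab H (fE e) = lab G e.
Arguments is_hom {k V W} G H fV fE.

Definition is_embedding {k : nat} {V W : Type} (G : lgraph k V) (H : lgraph k W)
  (fV : V -> W) (fE : edge G -> edge H) : Prop :=
  is_hom G H fV fE /\ injective fV /\ injective fE.
Arguments is_embedding {k V W} G H fV fE.

(* Reduced words. The list [w] = [:: w_1; ...; w_m] stores the word
   w_m ... w_1 in reading order of the path (w_1 first). *)
Definition reduced {k : nat} (w : seq (letter k)) : Prop :=
  forall j, j.+1 < size w -> nth beta_l w j.+1 <> linv (nth beta_l w j).

(* The path P(w, v_0): vertices v_0..v_m = 'I_m.+1, edge (j, true) goes from
   v_j to v_(j+1) with label w_(j+1); (j, false) is its inverse edge. *)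
Section Path.
Variables (k : nat) (w : seq (letter k)).
Let m := size w.
Definition pedge := ('I_m * bool)%type.
Definition pbar (e : pedge) : pedge := (e.1, ~~ e.2).
Definition psrc (e : pedge) : 'I_m.+1 :=
  if e.2 then inord e.1 else inord e.1.+1.
Definition ptgt (e : pedge) : 'I_m.+1 :=
  if e.2 then inord e.1.+1 else inord e.1.
Definition plab (e : pedge) : letter k :=
  if e.2 then nth beta_l w e.1 else linv (nth beta_l w e.1).
Lemma pbarK e : pbar (pbar e) = e. Proof. by case: e => a []. Qed.
Lemma pbar_nofix e : pbar e <> e. Proof. by case: e => a [] []. Qed.
Lemma psrc_bar e : psrc (pbar e) = ptgt e. Proof. by case: e => a []. Qed.
Lemma plab_bar e : plab (pbar e) = linv (plab e).
Proof. case: e => a [] //=; rewrite /plab /=; case: (nth _ _ _) => g b //=; by rewrite /linv /= negbK. Qed.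
Definition path_graph : lgraph k 'I_m.+1 :=
  @LGraph k 'I_m.+1 pedge pbar psrc ptgt plab pbarK pbar_nofix psrc_bar plab_bar.
End Path.

(* The pre-graph G_0 on X = int, beta acting as x |-> x + 1:
   edge (x, true) goes from x to x+1 labeled beta, (x, false) is its inverse. *)
Section PreGraph.
Variable k : nat.
Definition g0edge := (int * bool)%type.
Definition g0bar (e : g0edge) : g0edge := (e.1, ~~ e.2).
Definition g0src (e : g0edge) : int := if e.2 then e.1 else (e.1 + 1)%R.
Definition g0tgt (e : g0edge) : int := if e.2 then (e.1 + 1)%R else e.1.
Definition g0lab (e : g0edge) : letter k := (None, e.2).
Lemma g0barK e : g0bar (g0bar e) = e. Proof. by case: e => a []. Qed.
Lemma g0bar_nofix e : g0bar e <> e. Proof. by case: e => a [] []. Qed.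
Lemma g0src_bar e : g0src (g0bar e) = g0tgt e. Proof. by case: e => a []. Qed.
Lemma g0lab_bar e : g0lab (g0bar e) = linv (g0lab e). Proof. by case: e => a []. Qed.
Definition G0 : lgraph k int :=
  @LGraph k int g0edge g0bar g0src g0tgt g0lab g0barK g0bar_nofix g0src_bar g0lab_bar.
End PreGraph.

Definition extension_via {k : nat} (G : lgraph k int) (incl : edge (G0 k) -> edge G) : Prop :=
  well_labeled G /\ is_embedding (G0 k) G id incl.

Definition finite_complement {k : nat} (G : lgraph k int) (incl : edge (G0 k) -> edge G) : Prop :=
  exists l : list (edge G), forall e : edge G, (forall e0, incl e0 <> e) -> In e l.
Arguments extension_via {k} G incl.
Arguments finite_complement {k} G incl.

(* Place the vertices of P(w, v_0) on the integers, far to the right of F: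
   a letter beta^{+-1} moves by +-1, so every beta-edge of the path is already
   an edge of G_0, and a letter alpha_i^{+-1} moves by L = |w| + 1.  The
   placement is injective: a stretch of the path containing an alpha-letter
   moves by at least L - (|w| - 1) > 0, and a stretch without one is, since w
   is reduced, a nonempty power of a single letter beta^{+-1}.  Adding the
   placed alpha-edges of the path to G_0 then gives a well-labeled graph,
   because P(w, v_0) is itself well-labeled when w is reduced. *)

From Stdlib Require Import List.
From mathcomp Require Import all_boot all_order all_algebra lra.
Set Implicit Arguments. Unset Strict Implicit. Unset Printing Implicit Defensive.
Import Order.TTheory GRing.Theory Num.Theory.

Local Open Scope ring_scope.

Section Steps.
Variable k : nat.
Implicit Types (a b : letter k) (u : seq (letter k)).

Definition is_alpha a : bool := a.1 != None.

Definition no_cancel a b : bool := b != linv a.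

Lemma reducedE u : reduced u <-> sorted no_cancel u.
Proof.
split=> [hu | /(sortedP beta_l) hu j /hu /eqP //].
by apply/(sortedP beta_l) => j /hu /eqP.
Qed.

Lemma beta_no_cancel a b :
  ~~ is_alpha a -> ~~ is_alpha b -> no_cancel a b -> b = a.
Proof. by case: a b => [[?|] s] [[?|] t] //= _ _; case: s; case: t. Qed.

Variable L : nat.

Definition step a : int := if is_alpha a then L%:R else if a.2 then 1 else -1.

Lemma step_ge a : -1 <= step a.
Proof.
rewrite /step; case: ifP => _; last by case: a.2.
by have := ler0n int L; lra.
Qed.

Lemma sum_step_ge u : - (size u)%:R <= \sum_(a <- u) step a.
Proof.
elim: u => [|a u IH]; first by rewrite big_nil.
rewrite big_cons /= -addn1 natrD opprD addrC.
by apply: lerD => //; apply: step_ge.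
Qed.

Lemma sum_step_alpha u :
  has is_alpha u -> (size u < L)%N -> 0 < \sum_(a <- u) step a.
Proof.
case/hasP=> a /splitPr [u1 u2] alpha_a.
rewrite big_cat big_cons.
have -> : step a = L%:R by rewrite /step alpha_a.
rewrite size_cat /= => hL.
have hL' : (size u1)%:R + (size u2)%:R < L%:R :> int.
  by rewrite -natrD ltr_nat (leq_ltn_trans _ hL) // leq_add2l.
have := sum_step_ge u1; have := sum_step_ge u2; lra.
Qed.

Lemma sum_step_beta_run a u : path no_cancel a u -> all (predC is_alpha) (a :: u) ->
  \sum_(b <- a :: u) step b = step a *+ (size u).+1.
Proof.
elim: u a => [|b u IH] a; first by rewrite big_seq1.
rewrite /= => /andP [ab bu] /and3P [beta_a beta_b beta_u].
have beta_bu : all (predC is_alpha) (b :: u) by rewrite /= beta_b.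
by rewrite big_cons (IH b bu beta_bu) (beta_no_cancel beta_a beta_b ab) -mulrS.
Qed.

(* A stretch with an alpha moves right; a stretch without one is, being reduced, a power of one beta letter. *)
Lemma sum_step_neq0 u :
  sorted no_cancel u -> u != [::] -> (size u < L)%N -> \sum_(a <- u) step a != 0.
Proof.
case: u => [|a u] //= au _ hL.
have [/sum_step_alpha alpha_u | /hasPn beta_u] := boolP (has is_alpha (a :: u)).
  by rewrite gt_eqF // alpha_u.
rewrite sum_step_beta_run //; last by apply/allP.
rewrite mulrn_eq0 /= /step.
have /negPf -> := beta_u a (mem_head _ _).
by case: a.2.
Qed.

End Steps.

Section Placement.
Variables (k : nat) (w : seq (letter k)) (B : int).

Definition place (j : nat) : int := B + \sum_(a <- take j w) step (size w).+1 a.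

Lemma place_S j :
  (j < size w)%N -> place j.+1 = place j + step (size w).+1 (nth beta_l w j).
Proof. by move=> hj; rewrite /place (take_nth beta_l hj) -cats1 big_cat big_seq1 addrA. Qed.

Lemma place_ge j : B - (size w)%:R <= place j.
Proof.
rewrite /place lerD2l.
apply: le_trans (sum_step_ge _ _); rewrite lerN2 ler_nat size_take.
by case: ltnP => // /ltnW.
Qed.

Lemma place_neq i j : reduced w -> (i < j)%N -> (j <= size w)%N -> place i != place j.
Proof.
move=> /reducedE hw hij hj.
rewrite /place -(subnKC (ltnW hij)) takeD big_cat /= addrA.
rewrite -[X in X != _]addr0 (inj_eq (addrI _)) eq_sym.
have size_seg : size (take (j - i) (drop i w)) = (j - i)%N.
  by rewrite size_takel // size_drop leq_sub2r.
apply: sum_step_neq0; rewrite ?size_seg.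
- exact/take_sorted/drop_sorted.
- by rewrite -size_eq0 size_seg subn_eq0 -ltnNge.
- by rewrite ltnS (leq_trans (leq_subr _ _) hj).
Qed.

Lemma place_inj : reduced w -> {in [pred j | (j <= size w)%N] &, injective place}.
Proof.
move=> hw i j /= hi hj eq_ij.
case: (ltngtP i j) => // [ij | ji].
- by have /negP[] := place_neq hw ij hj; rewrite eq_ij.
- by have /negP[] := place_neq hw ji hi; rewrite eq_ij.
Qed.

End Placement.

Section AlphaPart.
Variables (k : nat) (V : Type) (H : lgraph k V).

Lemma tgt_bar (e : edge H) : tgt H (ebar H e) = src H e.
Proof. by rewrite -src_bar ebarK. Qed.

Lemma hom_injective_edges (W : Type) (G : lgraph k W) fV fE :
  well_labeled H -> is_hom H G fV fE -> injective fV -> injective fE.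
Proof.
move=> wlH homf fV_inj e e' eq_fE.
have [src_e [_ lab_e]] := homf e; have [src_e' [_ lab_e']] := homf e'.
by apply: wlH; [apply: fV_inj; rewrite -src_e -src_e' | rewrite -lab_e -lab_e']; rewrite eq_fE.
Qed.

Definition alpha_edge := {e : edge H | is_alpha (lab H e)}.

Lemma is_alpha_bar (e : edge H) : is_alpha (lab H e) -> is_alpha (lab H (ebar H e)).
Proof. by rewrite lab_bar. Qed.

Definition alpha_bar (e : alpha_edge) : alpha_edge :=
  exist _ (ebar H (val e)) (is_alpha_bar (valP e)).

Lemma alpha_barK (e : alpha_edge) : alpha_bar (alpha_bar e) = e.
Proof. by apply: val_inj; rewrite /= ebarK. Qed.

Lemma alpha_bar_nofix (e : alpha_edge) : alpha_bar e <> e.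
Proof. by move=> /(congr1 val) /ebar_nofix. Qed.

Definition alpha_part : lgraph k V :=
  @LGraph k V alpha_edge alpha_bar (fun e => src H (val e)) (fun e => tgt H (val e))
    (fun e => lab H (val e)) alpha_barK alpha_bar_nofix
    (fun e => src_bar (val e)) (fun e => lab_bar (val e)).

Lemma alpha_part_well_labeled : well_labeled H -> well_labeled alpha_part.
Proof. by move=> wlH e e' src_e lab_e; apply: val_inj; apply: wlH. Qed.

End AlphaPart.

Lemma G0_well_labeled k : well_labeled (G0 k).
Proof.
case=> [x b] [x' b'] src_x [eq_b]; subst b'.
by case: b src_x; rewrite /= /g0src /=; [move=> -> | move/addIr=> ->].
Qed.

Section Attach.
Variables (k : nat) (V : Type) (H : lgraph k V) (f : V -> int).

Definition attach_edge := (g0edge + edge H)%type.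

Definition attach_bar (e : attach_edge) : attach_edge :=
  match e with inl e => inl (g0bar e) | inr e => inr (ebar H e) end.
Definition attach_src (e : attach_edge) : int :=
  match e with inl e => g0src e | inr e => f (src H e) end.
Definition attach_tgt (e : attach_edge) : int :=
  match e with inl e => g0tgt e | inr e => f (tgt H e) end.
Definition attach_lab (e : attach_edge) : letter k :=
  match e with inl e => g0lab k e | inr e => lab H e end.

Lemma attach_barK e : attach_bar (attach_bar e) = e.
Proof. by case: e => e /=; rewrite ?g0barK ?ebarK. Qed.
Lemma attach_bar_nofix e : attach_bar e <> e.
Proof. by case: e => e [] /=; [apply: g0bar_nofix | apply: ebar_nofix]. Qed.
Lemma attach_src_bar e : attach_src (attach_bar e) = attach_tgt e.
Proof. by case: e => e /=; rewrite ?g0src_bar ?src_bar. Qed.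
Lemma attach_lab_bar e : attach_lab (attach_bar e) = linv (attach_lab e).
Proof. by case: e => e /=; rewrite ?g0lab_bar ?lab_bar. Qed.

Definition attach : lgraph k int :=
  @LGraph k int attach_edge attach_bar attach_src attach_tgt attach_lab
    attach_barK attach_bar_nofix attach_src_bar attach_lab_bar.

Lemma attach_well_labeled : well_labeled H -> injective f ->
  (forall e, is_alpha (lab H e)) -> well_labeled attach.
Proof.
move=> wlH f_inj alphaH [e|e] [e'|e'] /= src_e lab_e.
- by rewrite (G0_well_labeled src_e lab_e).
- by have := alphaH e'; rewrite /is_alpha -lab_e.
- by have := alphaH e; rewrite /is_alpha lab_e.
- by rewrite (wlH _ _ (f_inj _ _ src_e) lab_e).
Qed.

Lemma attach_extension : well_labeled H -> injective f ->
  (forall e, is_alpha (lab H e)) -> extension_via attach inl.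
Proof.
move=> wlH f_inj alphaH; split; first exact: attach_well_labeled.
by split; [|split; [|exact: inl_inj]].
Qed.

Lemma attach_finite_complement (l : seq (edge H)) :
  (forall e, List.In e l) -> finite_complement attach inl.
Proof.
move=> l_all; exists (List.map inr l) => [[e|e]] not_G0; first by case: (not_G0 e).
exact/List.in_map/l_all.
Qed.

End Attach.

Section AlphaAttach.
Variables (k : nat) (V : Type) (H : lgraph k V) (f : V -> int).
Hypothesis f_beta : forall e, lab H e = beta_l -> f (tgt H e) = f (src H e) + 1.

(* A beta-edge is sent to the edge of G_0 with the same label leaving the image of its source. *)
Definition embed_edge (e : edge H) : edge (attach (alpha_part H) f) :=
  match insub e with
  | Some a => inr a
  | None => inl (if (lab H e).2 then f (src H e) else f (tgt H e), (lab H e).2)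
  end.

Lemma embed_edge_hom : is_hom H (attach (alpha_part H) f) f embed_edge.
Proof.
move=> e; rewrite /embed_edge; case: insubP => [a _ <- // | ].
rewrite /is_alpha negbK => /eqP lab_e1.
have lab_e : lab H e = (None, (lab H e).2) by rewrite -lab_e1; case: (lab H e).
rewrite /= /g0src /g0tgt /g0lab -lab_e; case: (lab H e).2 lab_e => lab_e /=.
- by rewrite f_beta.
- by rewrite -tgt_bar -src_bar f_beta // lab_bar lab_e.
Qed.

Lemma embed_edge_embedding : well_labeled H -> injective f ->
  is_embedding H (attach (alpha_part H) f) f embed_edge.
Proof.
move=> wlH f_inj; have hom := embed_edge_hom.
by split; [|split; [|apply: hom_injective_edges hom f_inj]].
Qed.

End AlphaAttach.

Section PathGraph.
Variables (k : nat) (w : seq (letter k)).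

Lemma psrc_val (e : pedge w) : val (psrc e) = if e.2 then val e.1 else (val e.1).+1.
Proof. by case: e => [[j hj] []] /=; rewrite inordK // ltnS ltnW. Qed.

Lemma ptgt_val (e : pedge w) : val (ptgt e) = if e.2 then (val e.1).+1 else val e.1.
Proof. by case: e => [[j hj] []] /=; rewrite inordK // ltnS ltnW. Qed.

Lemma path_graph_well_labeled : reduced w -> well_labeled (path_graph w).
Proof.
move=> hw [j b] [j' b'] /(congr1 val); rewrite /= !psrc_val /plab /=.
case: b; case: b' => /= eq_j lab_j.
- by congr pair; apply: val_inj.
- by exfalso; apply: (hw j'); rewrite -eq_j ?ltn_ord.
- by exfalso; apply: (hw j); rewrite eq_j ?ltn_ord.
- by congr pair; apply: val_inj; case: eq_j.
Qed.

Lemma place_beta B (e : pedge w) : plab e = beta_l ->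
  place w B (ptgt e) = place w B (psrc e) + 1.
Proof.
rewrite psrc_val ptgt_val /plab; case: e => [[j hj] []] /= lab_j; rewrite place_S //.
- by rewrite lab_j.
- by move: lab_j; case: (nth _ _ _) => g s [-> /negbRL ->]; rewrite addrK.
Qed.

End PathGraph.

Lemma In_mem (T : eqType) (x : T) (s : seq T) : x \in s -> List.In x s.
Proof. by elim: s => //= y s IH; rewrite inE => /predU1P [->|/IH]; [left | right]. Qed.

Lemma mem_le_sum_norm (R : realDomainType) (F : seq R) x :
  x \in F -> x <= \sum_(y <- F) `|y|.
Proof.
elim: F => // y F IH; rewrite inE big_cons => /predU1P [-> | /IH x_le].
- by apply: le_trans (ler_norm y) _; rewrite lerDl sumr_ge0.
- by apply: le_trans x_le _; rewrite lerDr.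
Qed.

Local Close Scope ring_scope.

Theorem lemma8 (k : nat) (hk : 1 <= k) (w : seq (letter k)) (hw : reduced w)
  (F : seq int) :
  exists (G : lgraph k int) (incl : edge (G0 k) -> edge G),
    extension_via G incl /\
    finite_complement G incl /\
    exists (fV : 'I_(size w).+1 -> int) (fE : edge (path_graph w) -> edge G),
      is_embedding (path_graph w) G fV fE /\
      (forall v : 'I_(size w).+1, fV v \notin F).
Proof.
pose B : int := ((size w)%:R + 1 + \sum_(y <- F) `|y|)%R.
pose fV (v : 'I_(size w).+1) := place w B v.
have fV_inj : injective fV.
  by move=> i j /(place_inj hw) eq_ij; apply/val_inj/eq_ij; rewrite inE -ltnS.
have wl_path := path_graph_well_labeled hw.
exists (attach (alpha_part (path_graph w)) fV), inl; split; [|split].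
- apply: attach_extension => //; first exact: alpha_part_well_labeled.
  by case.
- have edges_listed (e : {e : pedge w | is_alpha (plab e)}) : List.In e (enum {: _}).
    exact/In_mem/mem_enum.
  exact: (@attach_finite_complement k _ (alpha_part (path_graph w)) fV _ edges_listed).
- have fV_beta e : lab (path_graph w) e = beta_l -> fV (tgt _ e) = (fV (src _ e) + 1)%R.
    exact: place_beta.
  exists fV, (embed_edge fV); split; first exact: embed_edge_embedding fV_beta wl_path fV_inj.
  move=> v; apply/negP => /mem_le_sum_norm; have := place_ge w B v; rewrite /fV /B; lra.
Qed.
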